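(* Let $n\ge1$, $D\ge1$, and let $X_n=\{\mathbf{x}^0,\ldots,\mathbf{x}^{n-1}\}\subseteq\{0,1\}^D$ consist of $n$ pairwise distinct vectors, indexed so that $\mathbf{a}\cdot\mathbf{x}^0<\cdots<\mathbf{a}\cdot\mathbf{x}^{n-1}$ for some $\mathbf{a}\in\mathbb{Z}^D$. Then there is a four-layer Boolean threshold network with $D$ input nodes, $3\lceil\sqrt n\rceil+D$ hidden nodes in total (in layers $2$ and $3$), and $\lceil\log_2 n\rceil$ output nodes that maps $\mathbf{x}^i$ to the $\lceil\log_2 n\rceil$-dimensional binary representation of $i$, for every $i=0,\ldots,n-1$.
   Context: A Boolean threshold function is a map $\{0,1\}^h\to\{0,1\}$, $\mathbf{u}\mapsto[\mathbf{w}\cdot\mathbf{u}\ge\theta]$ (value $1$ iff $\mathbf{w}\cdot\mathbf{u}\ge\theta$) with $\mathbf{w}\in\mathbb{Z}^h,\theta\in\mathbb{Z}$. An $L$-layer Boolean threshold network has layers $1,\ldots,L$; layer $1$ is the input; each node of layer $t+1$ computes a Boolean threshold function of the values of layer $t$; the network computes the map input $\mapsto$ values of layer $L$; layers $2,\ldots,L-1$ are hidden. *)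

From mathcomp Require Import all_boot all_order all_algebra.
Set Implicit Arguments. Unset Strict Implicit. Unset Printing Implicit Defensive.
Import Order.TTheory GRing.Theory Num.Theory.
Local Open Scope ring_scope.

Definition b2z (b : bool) : int := Posz (nat_of_bool b).

Definition dotz (h : nat) (w : 'I_h -> int) (u : 'I_h -> bool) : int :=
  \sum_(k < h) w k * b2z (u k).

Definition threshold (h : nat) (w : 'I_h -> int) (theta : int)
  (u : 'I_h -> bool) : bool := theta <= dotz w u.

Definition tlayer (h k : nat) (W : 'I_k -> 'I_h -> int) (th : 'I_k -> int)
  (u : 'I_h -> bool) : 'I_k -> bool :=
  fun j => threshold (W j) (th j) u.

Definition ceil_sqrt (n : nat) : nat :=
  find (fun s => (n <= s * s)%N) (iota 0 n.+1).

Definition ceil_log2 (n : nat) : nat := up_log 2 n.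

Definition bit (i j : nat) : bool := odd (i %/ 2 ^ j).

From mathcomp Require Import all_boot all_order all_algebra.
From mathcomp Require Import zify.
Import Order.TTheory GRing.Theory Num.Theory.
Local Open Scope ring_scope.

(* Write i = q * B + r with B = 2 ^ k the least power of two >= s = ceil_sqrt n.
   As the scores a . x^i increase strictly, [v < q] is the threshold
   [a . x >= a . x^((v+1) B)]: layer 2 computes the unary code of q and copies
   the input.  In layer 3, [r' < r] is [a . x >= a . x^(q B + r' + 1)], a
   threshold depending on q, which telescopes into weights on the unary code of
   q (copied as well).  A 0/1 function f with f 0 = 0 of a unary-coded P is the
   threshold [sum_c (f (c+1) - f c) [c < P] >= 1]; applied to the bits, this
   reads the low bits of i off r and the high bits off q.  The node count fits
   since s <= B <= 2 s gives 2 ((n-1) / B) + B < 3 s. *)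

Definition dotn (h : nat) (w : nat -> int) (u : nat -> bool) : int :=
  \sum_(0 <= k < h) w k * b2z (u k).

Definition nlayer (h : nat) (w : nat -> nat -> int) (t : nat -> int)
  (u : nat -> bool) (j : nat) : bool :=
  t j <= dotn h (w j) u.

Lemma dotz_dotn (h : nat) (w : nat -> int) (u : 'I_h -> bool) (g : nat -> bool) :
  (forall k : 'I_h, u k = g k) -> dotz (fun k : 'I_h => w k) u = dotn h w g.
Proof. by move=> ug; rewrite /dotn big_mkord; apply: eq_bigr => k _; rewrite ug. Qed.

Lemma dotz_inord (h : nat) (w : 'I_h.+1 -> int) (u : 'I_h.+1 -> bool) :
  dotz w u = dotn h.+1 (fun k => w (inord k)) (fun k => u (inord k)).
Proof. by rewrite /dotn big_mkord; apply: eq_bigr => k _; rewrite inord_val. Qed.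

Lemma tlayer_natE (h l : nat) (w : nat -> nat -> int) (t : nat -> int)
    (u : 'I_h -> bool) (g : nat -> bool) :
  (forall k : 'I_h, u k = g k) ->
  forall j : 'I_l,
    tlayer (fun (j : 'I_l) (k : 'I_h) => w j k) (fun j => t j) u j = nlayer h w t g j.
Proof. by move=> ug j; rewrite /tlayer /threshold (@dotz_dotn _ (w j) _ _ ug). Qed.

Lemma b2z_ge1 (b : bool) : (1 <= b2z b) = b.
Proof. by case: b. Qed.

Lemma dotn_unit (h u : nat) (g : nat -> bool) :
  (u < h)%N -> dotn h (fun v => b2z (v == u)) g = b2z (g u).
Proof.
move=> hu; rewrite /dotn (eq_bigr (fun v => if v == u then b2z (g v) else 0)).
  by rewrite -big_mkcond big_nat1_eq hu.
by move=> v _; case: eqP; rewrite ?mul1r ?mul0r.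
Qed.

Lemma dotn_cat (h1 h2 : nat) (w : nat -> int) (g : nat -> bool) :
  dotn (h1 + h2) w g =
  dotn h1 w g + dotn h2 (fun k => w (h1 + k)%N) (fun k => g (h1 + k)%N).
Proof.
rewrite /dotn (big_cat_nat (leq0n h1) (leq_addr h2 h1)) /=.
by rewrite (big_addn 0 _ h1) addKn; congr (_ + _); apply: eq_bigr => k _; rewrite addnC.
Qed.

Lemma dotn0 (h : nat) (w : nat -> int) (g : nat -> bool) :
  (forall k, (k < h)%N -> w k = 0) -> dotn h w g = 0.
Proof. by move=> w0; rewrite /dotn big_nat big1 // => k /andP[_ /w0 ->]; rewrite mul0r. Qed.

Definition window (lo len : nat) (w : nat -> int) (u : nat) : int :=
  if (lo <= u < lo + len)%N then w (u - lo)%N else 0.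

Lemma dotn_window (h lo len : nat) (w : nat -> int) (g : nat -> bool) :
  (lo + len <= h)%N ->
  dotn h (window lo len w) g = dotn len w (fun r => g (lo + r)%N).
Proof.
move=> hh; rewrite -(subnKC hh) -addnA dotn_cat dotn_cat.
rewrite (dotn0 lo) ?add0r => [|k hk]; last by rewrite /window ifF //; lia.
rewrite [X in _ + X]dotn0 ?addr0 => [|k _]; last by rewrite /window ifF //; lia.
by apply: eq_big_nat => r hr; rewrite /window ifT ?addKn //; lia.
Qed.

Lemma sum_step_thermometer (F : nat -> int) (M P : nat) : (P <= M)%N ->
  \sum_(0 <= c < M) (F c.+1 - F c) * b2z (c < P)%N = F P - F 0%N.
Proof.
move=> hPM; rewrite (big_cat_nat (leq0n P) hPM) /=.
have -> : \sum_(P <= c < M) (F c.+1 - F c) * b2z (c < P)%N = 0.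
  by rewrite big_nat big1 // => c /andP[hc _]; rewrite ltnNge hc mulr0.
by rewrite addr0; apply: telescope_sumr_eq => // c /andP[_ hc]; rewrite hc mulr1.
Qed.

Definition step_weight (f : nat -> bool) (c : nat) : int := b2z (f c.+1) - b2z (f c).

Lemma thermometer_readout (f g : nat -> bool) (M P : nat) :
  (P <= M)%N -> f 0%N = false -> (forall c, (c < M)%N -> g c = (c < P)%N) ->
  (1 <= dotn M (step_weight f) g) = f P.
Proof.
move=> hPM f0 hg; rewrite /dotn.
rewrite (eq_big_nat _ _ (F2 := fun c => step_weight f c * b2z (c < P)%N)).
  by rewrite sum_step_thermometer // f0 subr0 b2z_ge1.
by move=> c /andP[_ /hg ->].
Qed.

Lemma bit0n (j : nat) : bit 0 j = false.
Proof. by rewrite /bit div0n. Qed.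

Lemma bit_modn (i k j : nat) : (j < k)%N -> bit (i %% 2 ^ k) j = bit i j.
Proof.
move=> hj; rewrite /bit {2}(divn_eq i (2 ^ k)) -(subnK (ltnW hj)) expnD mulnA.
by rewrite divnMDl ?expn_gt0 // oddD oddM oddX subn_eq0 leqNgt hj andbF.
Qed.

Lemma bit_divn (i k j : nat) : (k <= j)%N -> bit (i %/ 2 ^ k) (j - k) = bit i j.
Proof. by move=> hj; rewrite /bit -divnMA -expnD subnKC. Qed.

Section BlockNetwork.

Variables (n D k : nat) (a : nat -> int) (x : nat -> nat -> bool).

Hypothesis score_increasing :
  forall i j, (i < j < n)%N -> dotn D a (x i) < dotn D a (x j).

Let score i := dotn D a (x i).
Let B := (2 ^ k)%N.
Let M := (n.-1 %/ B)%N.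

Definition score_ext (c : nat) : int := if (c < n)%N then score c else score n.-1 + 1.

Lemma score_le (c i : nat) : (c < n)%N -> (i < n)%N -> (score c <= score i) = (c <= i)%N.
Proof.
move=> hc hi; case: (ltngtP c i) => [ci|ic|->]; last exact: lexx.
- by apply/ltW/score_increasing; rewrite ci.
- by apply/negbTE; rewrite -ltNge; apply: score_increasing; rewrite ic.
Qed.

Lemma score_ext_le (c i : nat) : (i < n)%N -> (score_ext c <= score i) = (c <= i)%N.
Proof.
move=> hi; rewrite /score_ext; case: ltnP => hc; first exact: score_le.
have n_gt0 : (0 < n)%N by apply: leq_ltn_trans hi.
have : score i <= score n.-1 by rewrite score_le ?prednK // -ltnS prednK.
by rewrite leqNgt (leq_trans hi hc); lia.
Qed.

Lemma block_index_le (i : nat) : (i < n)%N -> (i %/ B <= M)%N.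
Proof. by move=> hi; apply: leq_div2r; rewrite -ltnS (ltn_predK hi). Qed.

Definition w2 (v : nat) : nat -> int :=
  if (v < M)%N then a else fun l => b2z (l == v - M)%N.

Definition t2 (v : nat) : int := if (v < M)%N then score_ext (v.+1 * B) else 1.

Definition y2 (i v : nat) : bool := if (v < M)%N then (v < i %/ B)%N else x i (v - M).

Lemma layer2E (i v : nat) :
  (i < n)%N -> (v < M + D)%N -> nlayer D w2 t2 (x i) v = y2 i v.
Proof.
move=> hi hv; rewrite /nlayer /w2 /t2 /y2; case: ifP => hvM.
  by rewrite score_ext_le // -leq_divRL ?expn_gt0.
by rewrite dotn_unit ?b2z_ge1 //; lia.
Qed.

Definition remainder_weight (r v : nat) : int :=
  if (v < M)%N then - (score_ext (v.+1 * B + r.+1) - score_ext (v * B + r.+1))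
  else a (v - M).

Lemma remainder_node (i r : nat) : (i < n)%N ->
  (score_ext r.+1 <= dotn (M + D) (remainder_weight r) (y2 i)) = (r < i %% B)%N.
Proof.
move=> hi; pose F c := score_ext (c * B + r.+1).
have -> : dotn (M + D) (remainder_weight r) (y2 i) =
          - (F (i %/ B)%N - F 0%N) + score i.
  rewrite dotn_cat -(sum_step_thermometer F _ _ (block_index_le i hi)) -sumrN.
  congr (_ + _).
    by apply: eq_big_nat => v /andP[_ hv]; rewrite /remainder_weight /y2 hv mulNr.
  by apply: eq_big_nat => l _; rewrite /remainder_weight /y2 ltnNge leq_addr /= addKn.
have -> : F 0%N = score_ext r.+1 by [].
rewrite (_ : (_ <= _ + _) = (F (i %/ B)%N <= score i)); last by apply/idP/idP; lia.
by rewrite score_ext_le // {2}(div.divn_eq i B) leq_add2l.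
Qed.

Definition w3 (u : nat) : nat -> int :=
  if (u < M)%N then fun v => b2z (v == u)
  else if (u < M + B.-1)%N then remainder_weight (u - M) else fun=> 0.

Definition t3 (u : nat) : int :=
  if (u < M)%N then 1 else if (u < M + B.-1)%N then score_ext (u - M).+1 else 1.

Definition y3 (i u : nat) : bool :=
  if (u < M)%N then (u < i %/ B)%N
  else if (u < M + B.-1)%N then (u - M < i %% B)%N else false.

Lemma layer3E (i u : nat) : (i < n)%N -> nlayer (M + D) w3 t3 (y2 i) u = y3 i u.
Proof.
move=> hi; rewrite /nlayer /w3 /t3 /y3; case: ifP => huM.
  by rewrite dotn_unit ?b2z_ge1 /y2 ?huM ?ltn_addr.
case: ifP => huB; first exact: remainder_node.
by rewrite dotn0.
Qed.

Definition w4 (j : nat) : nat -> int :=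
  if (j < k)%N then window M B.-1 (step_weight (bit^~ j))
  else window 0 M (step_weight (bit^~ (j - k)%N)).

Lemma layer4E (h i j : nat) : (i < n)%N -> (M + B.-1 <= h)%N ->
  nlayer h w4 (fun=> 1) (y3 i) j = bit i j.
Proof.
move=> hi hh; rewrite /nlayer /w4; case: ifP => hj.
  rewrite dotn_window // (thermometer_readout _ _ _ (i %% B)) ?bit0n ?bit_modn //.
    by rewrite -ltnS prednK ?ltn_mod ?expn_gt0.
  by move=> r hr; rewrite /y3 ltnNge leq_addr /= ltn_add2l hr addKn.
rewrite dotn_window ?(leq_trans (leq_addr _ _) hh) //.
rewrite (thermometer_readout _ _ _ (i %/ B)) ?bit0n ?bit_divn ?block_index_le //.
  by rewrite leqNgt hj.
by move=> c hc; rewrite /y3 add0n hc.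
Qed.

End BlockNetwork.

Lemma up_log2_le_double (s : nat) : (0 < s)%N -> (2 ^ up_log 2 s <= 2 * s)%N.
Proof.
move=> s_gt0; case: (ltnP 1 s) => [s_gt1|s_le1]; last first.
  by rewrite (_ : s = 1%N) ?up_log1 //; apply/eqP; rewrite eqn_leq s_le1.
have /andP[lt_s _] := up_log_bounds (isT : (1 < 2)%N) s_gt1.
have k_gt0 : (0 < up_log 2 s)%N by rewrite up_log_gt0 s_gt1.
by rewrite -(prednK k_gt0) expnS leq_mul2l ltnW.
Qed.

Lemma ceil_sqrtP (n : nat) : (n <= ceil_sqrt n * ceil_sqrt n)%N.
Proof.
have hn : has (fun s => n <= s * s)%N (iota 0 n.+1).
  apply/hasP; exists n; first by rewrite mem_iota /=.
  by case: n => // n; rewrite leq_pmulr.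
have := nth_find 0%N hn; rewrite /ceil_sqrt nth_iota //.
by move: hn; rewrite has_find size_iota.
Qed.

Lemma block_budget (n s B : nat) :
  (0 < n)%N -> (n <= s * s)%N -> (s <= B <= 2 * s)%N -> (2 * (n.-1 %/ B) + B < 3 * s)%N.
Proof.
move=> n_gt0 hn /andP[sB Bs]; have hM := leq_divM n.-1 B.
have B_gt0 : (0 < B)%N by apply: leq_trans sB; nia.
have hB : (B * B + 2 * (s * s) <= 3 * s * B)%N by nia.
have hMB : ((2 * (n.-1 %/ B) + B) * B < 3 * s * B)%N by nia.
by rewrite ltn_pmul2r in hMB.
Qed.

Theorem theorem15 (n D : nat) (hn : (1 <= n)%N) (hD : (1 <= D)%N)
  (x : 'I_n -> 'I_D -> bool)
  (hdist : forall i j : 'I_n, i <> j -> exists k, x i k <> x j k)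
  (hord : exists a : 'I_D -> int,
      forall i j : 'I_n, (i < j)%N -> dotz a (x i) < dotz a (x j)) :
  exists (h2 h3 : nat),
    (h2 + h3 = 3 * ceil_sqrt n + D)%N /\
    exists (W1 : 'I_h2 -> 'I_D -> int) (t1 : 'I_h2 -> int)
           (W2 : 'I_h3 -> 'I_h2 -> int) (t2 : 'I_h3 -> int)
           (W3 : 'I_(ceil_log2 n) -> 'I_h3 -> int) (t3 : 'I_(ceil_log2 n) -> int),
      forall (i : 'I_n) (j : 'I_(ceil_log2 n)),
        tlayer W3 t3 (tlayer W2 t2 (tlayer W1 t1 (x i))) j = bit i j.
Proof.
(* [hdist] is implied by the strict order of the scores in [hord]. *)
case: n hn x hdist hord => [//|n] _ x _ [a ha].
case: D hD x a ha => [//|D] _ x a ha.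
pose an l := a (inord l); pose xn i l := x (inord i) (inord l).
have xnE (i : 'I_n.+1) (l : 'I_D.+1) : x i l = xn i l by rewrite /xn !inord_val.
have score_incr i j : (i < j < n.+1)%N -> dotn D.+1 an (xn i) < dotn D.+1 an (xn j).
  move=> /andP[ij jn]; rewrite /an /xn -!dotz_inord.
  by apply: ha; rewrite !inordK //; apply: ltn_trans jn.
pose s := ceil_sqrt n.+1; pose k := up_log 2 s; pose M := (n %/ 2 ^ k)%N.
have hs := ceil_sqrtP n.+1; have s_gt0 : (0 < s)%N by rewrite -/s in hs; nia.
have budget : (2 * M + 2 ^ k < 3 * s)%N.
  by apply: (block_budget n.+1); rewrite ?up_logP ?up_log2_le_double.
exists (M + D.+1)%N, (3 * s - M)%N; split; first lia.
exists (fun v l => w2 n.+1 k an v l), (fun v => t2 n.+1 D.+1 k an xn v),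
  (fun u v => w3 n.+1 D.+1 k an xn u v), (fun u => t3 n.+1 D.+1 k an xn u),
  (fun j u => w4 n.+1 k j u), (fun=> 1).
move=> i j.
rewrite (tlayer_natE _ _ (w4 n.+1 k) (fun=> 1) _ (y3 n.+1 k i)) ?layer4E //.
  by rewrite -/M; lia.
move=> u; rewrite (tlayer_natE _ _ _ _ _ (y2 n.+1 k xn i)) //.
  exact: (layer3E _ _ _ _ _ score_incr).
move=> v.
by rewrite (tlayer_natE _ _ _ _ _ _ (xnE i)) (layer2E _ _ _ _ _ score_incr).
Qed.
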